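(* Let $(X,d)$ be a finite metric space. Consider sequences $G_0,G_1,\dots,G_k$ of graphs on vertex set $X$ where $G_0$ is the complete graph on $X$ and each $G_{i+1}$ is obtained from $G_i$ through a $d$-erasure. If such a sequence is maximal (i.e. $G_k$ admits no $d$-erasure), then $G_k$ is a minimum spanning tree of $(X,d)$. Moreover, every minimum spanning tree of $(X,d)$ arises as the final graph $G_k$ of some such maximal sequence.
   Context: All graphs are finite, undirected, simple; edges $xy$ are weighted by $d(xy)=d(x,y)$. A minimum spanning tree of $(X,d)$ is a spanning tree of the complete graph on $X$ minimizing the sum of the weights of its edges. A facet edge of $G$ is an edge $xy$ such that $\{x,y\}$ is a maximal clique of $G$. An edge of $G$ is exposed if it is contained in a unique maximal clique of $G$ and it is not a facet edge. For graphs $G,H$ on vertex set $X$, $H$ is obtained from $G$ through a $d$-erasure if $H=G-e$ for an exposed edge $e$ of $G$ such that $d(e)\ge d(e')$ for every exposed edge $e'$ of $G$. *)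

From HB Require Import structures.
From mathcomp Require Import all_boot all_order all_algebra.
From mathcomp Require Import reals.
Set Implicit Arguments. Unset Strict Implicit. Unset Printing Implicit Defensive.
Import Order.TTheory GRing.Theory Num.Theory.
Local Open Scope ring_scope.

Definition is_metric (R : realType) (X : finType) (d : X -> X -> R) : Prop :=
  [/\ forall x y, 0 <= d x y,
      forall x y, (d x y == 0) = (x == y),
      forall x y, d x y = d y x &
      forall x y z, d x z <= d x y + d y z].

(* A (finite, simple, undirected) graph on vertex set X is its set of edges,
   each edge being a 2-element subset of X. *)
Notation graph X := {set {set X}}.

Definition complete_graph (X : finType) : graph X :=
  [set e : {set X} | #|e| == 2%N].

Definition ew (R : realType) (X : finType) (d : X -> X -> R) (e : {set X}) : R :=
  if enum e is [:: x; y] then d x y else 0.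

Definition clique (X : finType) (G : graph X) (C : {set X}) : bool :=
  [forall x in C, forall y in C, (x != y) ==> ([set x; y] \in G)].

Definition maxclique (X : finType) (G : graph X) (C : {set X}) : bool :=
  clique G C && [forall C' : {set X}, (clique G C' && (C \subset C')) ==> (C' == C)].

Definition facet_edge (X : finType) (G : graph X) (e : {set X}) : bool :=
  (e \in G) && maxclique G e.

Definition exposed (X : finType) (G : graph X) (e : {set X}) : bool :=
  [&& e \in G,
      #|[set C : {set X} | maxclique G C & e \subset C]| == 1%N &
      ~~ facet_edge G e].

Definition derasure (R : realType) (X : finType) (d : X -> X -> R)
  (G H : graph X) : bool :=
  [exists e : {set X}, [&& exposed G e, H == G :\ e &
     [forall e' : {set X}, exposed G e' ==> (ew d e' <= ew d e)]]].

Definition adj (X : finType) (G : graph X) : rel X := fun x y => [set x; y] \in G.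

Definition connected (X : finType) (G : graph X) : Prop :=
  forall x y : X, connect (adj G) x y.

Definition acyclic (X : finType) (G : graph X) : Prop :=
  ~ exists s : seq X, [/\ uniq s, (3 <= size s)%N & cycle (adj G) s].

Definition spanning_tree (X : finType) (T : graph X) : Prop :=
  [/\ T \subset complete_graph X, connected T & acyclic T].

Definition total_weight (R : realType) (X : finType) (d : X -> X -> R)
  (T : graph X) : R := \sum_(e in T) ew d e.

Definition is_MST (R : realType) (X : finType) (d : X -> X -> R) (T : graph X) : Prop :=
  spanning_tree T /\
  forall T' : graph X, spanning_tree T' -> total_weight d T <= total_weight d T'.

(* Along a sequence of d-erasures starting from the complete graph, every
   graph G is chordal and has minimax paths: any u, v are joined in G by a path
   whose edges weigh at most d(u, v).  Chordality survives because the erased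
   edge lies in a unique maximal clique; minimax paths survive because, in a
   chordal graph, the ends of an exposed edge stay connected through the other
   exposed edges, which are no heavier than the erased one.  Once no exposed
   edge is left, the chordal graph is a forest, hence a spanning tree; and a
   spanning tree with minimax paths has, below every threshold, at least as
   many edges as any other spanning tree, so it is minimum.  Conversely,
   penalising the edges outside a given minimum spanning tree T by a tiny eps
   turns any maximal erasure sequence into one for d that ends at T. *)

From HB Require Import structures.
From mathcomp Require Import all_boot all_order all_algebra.
From mathcomp Require Import reals lra.
Set Implicit Arguments. Unset Strict Implicit. Unset Printing Implicit Defensive.
Import Order.TTheory GRing.Theory Num.Theory.

Section Cliques.
Variable X : finType.
Implicit Types (G H : graph X) (e f C D K W : {set X}) (x y z a b v : X).

Definition simple_graph G := G \subset complete_graph X.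

Lemma adjC G x y : adj G x y = adj G y x.
Proof. by rewrite /adj setUC. Qed.

Lemma adj_neq G x y : simple_graph G -> adj G x y -> x != y.
Proof. by move=> /subsetP sG /sG; rewrite inE cards2; case: (x != y). Qed.

Lemma simple_edge_set2 G f : simple_graph G -> f \in G ->
  exists x y, [/\ x != y, f = [set x; y] & adj G x y].
Proof.
move=> /subsetP sG fG; have := sG f fG; rewrite inE => /cards2P[x [y [xy fE]]].
by exists x, y; split; rewrite // /adj -fE.
Qed.

Lemma set2_eq_cases a b x y : [set a; b] = [set x; y] ->
  (a = x /\ b = y) \/ (a = y /\ b = x).
Proof.
move=> E.
have ha : a \in [set x; y] by rewrite -E set21.
have hb : b \in [set x; y] by rewrite -E set22.
have hx : x \in [set a; b] by rewrite E set21.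
have hy : y \in [set a; b] by rewrite E set22.
case/set2P: ha => ha; case/set2P: hb => hb; subst; auto.
- by case/set2P: hy => ->; auto.
- by case/set2P: hx => ->; auto.
Qed.

Lemma adj_setD1 G e a b : adj (G :\ e) a b = ([set a; b] != e) && adj G a b.
Proof. by rewrite /adj in_setD1. Qed.

Lemma set2_neq v c x y : v != x -> v != y -> [set v; c] != [set x; y].
Proof.
by move=> vx vy; apply/eqP => /set2_eq_cases[[E _]|[E _]];
  [move: vx | move: vy]; rewrite E eqxx.
Qed.

Lemma cliqueP G C :
  reflect (forall a b, a \in C -> b \in C -> a != b -> adj G a b) (clique G C).
Proof.
apply: (iffP forall_inP) => [h a b aC bC ab | h a aC].
  by have /forall_inP/(_ b bC)/implyP := h a aC; apply.
by apply/forall_inP => b bC; apply/implyP; apply: h.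
Qed.

Lemma cliquePn G W :
  reflect (exists a b, [/\ a \in W, b \in W, a != b & ~~ adj G a b]) (~~ clique G W).
Proof.
apply: (iffP forall_inPn) => [[a aW /forall_inPn[b bW]] | [a [b [aW bW ab nab]]]].
  by rewrite negb_imply => /andP[ab nab]; exists a, b.
by exists a => //; apply/forall_inPn; exists b; rewrite // negb_imply ab.
Qed.

Lemma sub_clique G H C : G \subset H -> clique G C -> clique H C.
Proof.
move=> /subsetP sGH /cliqueP h; apply/cliqueP => a b aC bC ab.
exact: sGH (h a b aC bC ab).
Qed.

Lemma clique3 G x y z : adj G x y -> adj G y z -> adj G x z -> clique G [set x; y; z].
Proof.
move=> xy yz xz; apply/cliqueP => a b.
by rewrite !inE => /orP[/orP[]|] /eqP-> /orP[/orP[]|] /eqP->;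
  rewrite ?eqxx // => _; rewrite // adjC.
Qed.

Lemma maxcliqueP G C :
  reflect (clique G C /\ forall D, clique G D -> C \subset D -> D = C) (maxclique G C).
Proof.
apply: (iffP andP) => [[cC /forallP h] | [cC h]]; split => //.
  by move=> D cD sCD; have /implyP := h D; rewrite cD sCD => /(_ isT) /eqP.
by apply/forallP => D; apply/implyP => /andP[cD sCD]; rewrite (h D cD sCD).
Qed.

Lemma maxclique_clique G C : maxclique G C -> clique G C.
Proof. by case/andP. Qed.

Lemma maxclique_eq G C K : maxclique G C -> clique G K -> C \subset K -> K = C.
Proof. by move=> /maxcliqueP[_ h]; apply: h. Qed.

Lemma maxclique_exists G K : clique G K -> exists2 C, maxclique G C & K \subset C.
Proof.
move=> cK; pose P C := clique G C && (K \subset C).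
have PK : P K by rewrite /P cK subxx.
have [C /andP[cC sKC] Cmax] := @arg_maxP _ _ {set X} K P (fun C => #|C|) PK.
exists C => //; apply/maxcliqueP; split => // D cD sCD.
apply/eqP; rewrite eq_sym eqEcard sCD /=.
by apply: Cmax; rewrite /P cD (subset_trans sKC sCD).
Qed.

Lemma exposedP G e :
  reflect (exists C, [/\ e \in G, maxclique G C, e \subset C, C != e &
                         forall D, maxclique G D -> e \subset D -> D = C])
          (exposed G e).
Proof.
apply: (iffP and3P) => [[eG /cards1P[C hC] nf] | [C [eG mC sC nCe hC]]].
  have : C \in [set D | maxclique G D & e \subset D] by rewrite hC set11.
  rewrite inE => /andP[mC sC]; exists C; split => //.
    by apply: contraNneq nf => Ce; rewrite /facet_edge eG -Ce.
  move=> D mD sD; have : D \in [set D | maxclique G D & e \subset D] by rewrite inE mD sD.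
  by rewrite hC inE => /eqP.
split => //.
  apply/cards1P; exists C; apply/setP => D; rewrite !inE.
  by apply/andP/eqP => [[mD sD] | ->]; [exact: hC | ].
by apply: contra nCe => /andP[_ me]; rewrite (hC e me (subxx e)).
Qed.

Lemma exposed_edge G e : exposed G e -> e \in G.
Proof. by case/and3P. Qed.

Lemma exposed_set2 G e : simple_graph G -> exposed G e ->
  exists x y, [/\ x != y, e = [set x; y] & adj G x y].
Proof. by move=> sG /exposed_edge; apply: simple_edge_set2. Qed.

Lemma exposed_common_nbr G C x y v : exposed G [set x; y] ->
  (forall D, maxclique G D -> [set x; y] \subset D -> D = C) ->
  adj G v x -> adj G v y -> v \in C.
Proof.
move=> /exposed_edge xy hC vx vy.
have [D mD sD] := maxclique_exists (clique3 vx xy vy).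
have sxyD : [set x; y] \subset D.
  by apply: subset_trans sD; apply/subsetP => w /set2P[]->; rewrite !inE eqxx ?orbT.
by rewrite -(hC D mD sxyD); apply: (subsetP sD); rewrite !inE eqxx.
Qed.

End Cliques.

Section Chordal.
Variable X : finType.
Implicit Types (G : graph X) (e C K W : {set X}) (x y a b c v w : X).

Definition simplicial G W v :=
  forall a b, a \in W -> b \in W -> adj G v a -> adj G v b -> a != b -> adj G a b.

(* Chordality, in the hereditary form given by Dirac's characterization. *)
Definition chordal G := forall W, W != set0 -> exists2 v, v \in W & simplicial G W v.

Lemma clique_simplicial G K v : clique G K -> simplicial G K v.
Proof. by move=> /cliqueP cK a b aK bK _ _; apply: cK. Qed.

Lemma simplicial_setD1 G W v c :
  simplicial G (W :\ v) c -> ~~ adj G v c -> simplicial G W c.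
Proof.
move=> sc nvc p q pW qW cp cq pq.
have pv : p != v by apply: contraNneq nvc => <-; rewrite adjC.
have qv : q != v by apply: contraNneq nvc => <-; rewrite adjC.
by apply: sc => //; rewrite !inE ?pv ?qv.
Qed.

Lemma chordal_two_simplicial G W : chordal G -> ~~ clique G W ->
  exists v1 v2, [/\ v1 \in W, v2 \in W, v1 != v2, ~~ adj G v1 v2 &
                    simplicial G W v1 /\ simplicial G W v2].
Proof.
move=> chG; have [n] := ubnP #|W|; elim: n W => // n IH W /ltnSE leWn ncW.
have [v vW sv] : exists2 v, v \in W & simplicial G W v.
  by apply: chG; apply: contraNneq ncW => ->; apply/cliqueP => a b; rewrite inE.
have ltW : #|W :\ v| < #|W| by rewrite (cardsD1 v W) vW.
case: (boolP (clique G (W :\ v))) => [cWv | /(IH _ (leq_trans ltW leWn))]; last first.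
  move=> [a [b [/setD1P[av aW] /setD1P[bv bW] ab nab [sa sb]]]].
  case: (boolP (adj G v a)) => va; last first.
    by exists v, a; split; rewrite 1?eq_sym //; split=> //; apply: simplicial_setD1 sa _.
  case: (boolP (adj G v b)) => vb; last first.
    by exists v, b; split; rewrite 1?eq_sym //; split=> //; apply: simplicial_setD1 sb _.
  by move: nab; rewrite (sv a b aW bW va vb ab).
have [w [wW wv nvw]] : exists w, [/\ w \in W, w != v & ~~ adj G v w].
  have /cliquePn[a [b [aW bW ab nab]]] := ncW.
  have [av | av] := eqVneq a v; first by exists b; rewrite bW -av eq_sym.
  have [bv | bv] := eqVneq b v; first by exists a; rewrite aW -bv adjC.
  by move: nab; rewrite (cliqueP _ _ cWv a b) // !inE ?av ?bv.
exists v, w; split; rewrite 1?eq_sym //; split => //.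
by apply: simplicial_setD1 nvw; apply: clique_simplicial.
Qed.

Lemma simplicial_erase G W v x y : simplicial G W v -> ~~ (adj G v x && adj G v y) ->
  simplicial (G :\ [set x; y]) W v.
Proof.
move=> sv nv a b aW bW; rewrite !adj_setD1 => /andP[_ va] /andP[_ vb] ab.
rewrite (sv a b aW bW va vb ab) andbT.
by apply: contra nv => /eqP/set2_eq_cases[[<- <-]|[<- <-]]; rewrite ?va ?vb.
Qed.

(* A simplicial vertex adjacent to both x and y lies in the unique maximal
   clique through [x y], so two non-adjacent ones cannot both be. *)
Lemma chordal_erase G e : simple_graph G -> chordal G -> exposed G e ->
  chordal (G :\ e).
Proof.
move=> sG chG ex; have [x [y [xy eE xyG]]] := exposed_set2 sG ex; subst e.
have /exposedP[C [_ mC _ _ hC]] := ex.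
move=> W W0.
case: (boolP ((x \in W) && (y \in W))) => [/andP[xW yW] | nW]; last first.
  have [v vW sv] := chG W W0; exists v => // a b aW bW.
  rewrite !adj_setD1 => /andP[_ va] /andP[_ vb] ab; rewrite (sv a b aW bW va vb ab) andbT.
  by apply: contra nW => /eqP/set2_eq_cases[[<- <-]|[<- <-]]; rewrite ?aW ?bW.
case: (boolP (clique G W)) => [cW | /(chordal_two_simplicial chG)]; last first.
  move=> [v1 [v2 [v1W v2W v12 nv12 [s1 s2]]]].
  case: (boolP (adj G v1 x && adj G v1 y)) => [/andP[v1x v1y] | n1]; last first.
    by exists v1 => //; apply: simplicial_erase.
  case: (boolP (adj G v2 x && adj G v2 y)) => [/andP[v2x v2y] | n2]; last first.
    by exists v2 => //; apply: simplicial_erase.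
  have v1C := exposed_common_nbr ex hC v1x v1y.
  have v2C := exposed_common_nbr ex hC v2x v2y.
  by move: nv12; rewrite (cliqueP _ _ (maxclique_clique mC) v1 v2).
exists x => // a b aW bW; rewrite !adj_setD1 => /andP[nxa xa] _ ab.
rewrite (cliqueP _ _ cW a b aW bW ab) andbT.
apply: contraNneq nxa => /set2_eq_cases[[ax _]|[ay _]]; last by rewrite ay.
by move: (adj_neq sG xa); rewrite ax eqxx.
Qed.

End Chordal.

Section Acyclic.
Variable X : finType.
Implicit Types (G : graph X) (e C D W : {set X}) (x y z a b u v w : X).

Definition attached_once G W := forall u, u \notin W ->
  forall p q, p \in W -> q \in W -> adj G u p -> adj G u q -> p = q.

(* The maximal clique through [v a] is v together with its neighbours in W;
   [attached_once G W] keeps every vertex outside W out of it. *)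
Lemma exposed_simplicial_edge G W v a b : simple_graph G ->
  v \in W -> a \in W -> b \in W -> adj G v a -> adj G v b -> a != b ->
  simplicial G W v -> attached_once G W -> exposed G [set v; a].
Proof.
move=> sG vW aW bW va vb ab sv once.
pose C := v |: [set w in W | adj G v w].
have inC w : (w \in C) = (w == v) || (w \in W) && adj G v w by rewrite !inE.
have cC : clique G C.
  apply/cliqueP => p q; rewrite !inC.
  by move=> /orP[/eqP->|/andP[pW vp]] /orP[/eqP->|/andP[qW vq]];
    rewrite ?eqxx // => pq; [rewrite adjC | apply: sv].
have subC D : clique G D -> v \in D -> a \in D -> D \subset C.
  move=> cD vD aD; apply/subsetP => w wD; rewrite inC.
  have [-> //|wv] := eqVneq w v.
  have vw : adj G v w by apply: (cliqueP _ _ cD); rewrite // eq_sym.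
  rewrite vw andbT; apply: contraT => wW.
  have wa : adj G w a by apply: (cliqueP _ _ cD) => //; apply: contraNneq wW => ->.
  have va' := once w wW v a vW aW (etrans (adjC G w v) vw) wa.
  by move: (adj_neq sG va); rewrite va' eqxx.
have vC : v \in C by rewrite inC eqxx.
have aC : a \in C by rewrite inC aW va orbT.
have mC : maxclique G C.
  apply/maxcliqueP; split => // D cD sCD; apply/eqP; rewrite eqEsubset sCD andbT.
  by apply: subC => //; apply: (subsetP sCD).
apply/exposedP; exists C; split => //.
- by apply/subsetP => w /set2P[] ->.
- apply/eqP => E; have : b \in C by rewrite inC bW vb orbT.
  rewrite E => /set2P[bv | ba]; last by rewrite ba eqxx in ab.
  by move: (adj_neq sG vb); rewrite bv eqxx.
- move=> D mD sD; apply/esym/(maxclique_eq mD (maxclique_clique mC)).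
  apply: subC; first exact: maxclique_clique.
    by apply: (subsetP sD); rewrite set21.
  by apply: (subsetP sD); rewrite set22.
Qed.

Lemma cycle_two_nbrs G s v : uniq s -> 2 < size s -> cycle (adj G) s -> v \in s ->
  exists a b, [/\ a \in s, b \in s, a != b, adj G v a & adj G v b].
Proof.
move=> us ss cs vs; have E := rot_index vs.
set p := drop _ _ ++ _ in E.
have us' : uniq (v :: p) by rewrite -E rot_uniq.
have cs' : cycle (adj G) (v :: p) by rewrite -E rot_cycle.
have ss' : 2 < size (v :: p) by rewrite -E size_rot.
have mem' w : w \in v :: p -> w \in s by rewrite -E mem_rot.
case: p {E} us' cs' ss' mem' => [|a [|c p2]] //= us' cs' _ mem'.
move: cs' => /and3P[va _]; rewrite rcons_path => /andP[_ lv].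
exists a, (last c p2); split; rewrite // 1?adjC //.
- by apply: mem'; rewrite !inE eqxx orbT.
- by apply: mem'; rewrite (in_cons v) (in_cons a) mem_last !orbT.
- by apply/eqP => E; move: us' => /and4P[_ + _ _]; rewrite E mem_last.
Qed.

(* Peel off simplicial vertices not on the cycle; the first one met on the
   cycle has two neighbours on it, and spans an exposed edge. *)
Lemma chordal_acyclic G : simple_graph G -> chordal G ->
  (forall e, ~~ exposed G e) -> acyclic G.
Proof.
move=> sG chG nex [s [us ss cs]].
suff : forall W, {subset s <= W} -> attached_once G W -> False.
  by move/(_ setT); apply=> [w _ | u]; rewrite in_setT.
move=> W; have [n] := ubnP #|W|; elim: n W => // n IH W /ltnSE leWn sW once.
have W0 : W != set0.
  by case: s ss sW {IH us cs} => // w s' _ sW; apply/set0Pn; exists w; rewrite sW ?mem_head.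
have [v vW sv] := chG W W0.
case: (boolP [exists a in W, exists b in W, [&& a != b, adj G v a & adj G v b]]).
  move=> /exists_inP[a aW /exists_inP[b bW /and3P[ab va vb]]].
  by have := nex [set v; a]; rewrite (exposed_simplicial_edge sG vW aW bW).
move=> nab.
have nbr1 p q : p \in W -> q \in W -> adj G v p -> adj G v q -> p = q.
  move=> pW qW vp vq; apply/eqP; apply: contraNT nab => pq.
  by apply/exists_inP; exists p => //; apply/exists_inP; exists q; rewrite ?pq ?vp ?vq.
have vs : v \notin s.
  apply/negP => /(cycle_two_nbrs us ss cs)[a [b [aS bS ab va vb]]].
  by move: ab; rewrite (nbr1 a b (sW a aS) (sW b bS) va vb) eqxx.
have ltW : #|W :\ v| < #|W| by rewrite (cardsD1 v W) vW.
apply: (IH (W :\ v) (leq_trans ltW leWn)).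
  by move=> w ws; rewrite in_setD1 sW // andbT; apply: contraNneq vs => <-.
move=> u; rewrite in_setD1 negb_and negbK => /orP[/eqP-> | uW] p q.
  by move=> /setD1P[_ pW] /setD1P[_ qW]; apply: nbr1.
by move=> /setD1P[_ pW] /setD1P[_ qW]; apply: once.
Qed.

Lemma acyclic_no_exposed G e : simple_graph G -> acyclic G -> ~~ exposed G e.
Proof.
move=> sG ac; apply/negP => ex.
have [x [y [xy eE axy]]] := exposed_set2 sG ex; subst e.
have /exposedP[C [_ mC sC nCe _]] := ex.
have /properP[_ [z zC zxy]] : [set x; y] \proper C by rewrite properEneq eq_sym nCe.
have cC := cliqueP _ _ (maxclique_clique mC).
have xC : x \in C by apply: (subsetP sC); rewrite set21.
have yC : y \in C by apply: (subsetP sC); rewrite set22.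
have zx : z != x by apply: contraNneq zxy => ->; rewrite set21.
have zy : z != y by apply: contraNneq zxy => ->; rewrite set22.
apply: ac; exists [:: x; y; z]; split => //.
  by rewrite /= !inE negb_or xy eq_sym zx eq_sym zy.
by rewrite /cycle /= axy !cC // eq_sym.
Qed.

End Acyclic.

Section Bypass.
Variable X : finType.
Implicit Types (G L : graph X) (e f C D K W : {set X}) (x y z a b u v w : X).

Definition support G := [set w | [exists u, adj G w u]].
Definition nbrs G v := [set w | adj G v w].
Definition nbr_edges G v := [set f : {set X} | f \subset nbrs G v].
Definition del_vertex G v := [set f in G | v \notin f].

Lemma adj_del_vertex G v a b : adj (del_vertex G v) a b = [&& adj G a b, a != v & b != v].
Proof. by rewrite /adj !inE negb_or; congr (_ && (_ && _)); rewrite eq_sym. Qed.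

Lemma del_vertex_sub G v : del_vertex G v \subset G.
Proof. by apply/subsetP => f; rewrite inE => /andP[]. Qed.

Lemma card_del_vertex G v u : adj G v u -> #|del_vertex G v| < #|G|.
Proof.
move=> vu; rewrite proper_card // properE del_vertex_sub; apply/subsetPn.
by exists [set v; u]; rewrite // inE set21 andbF.
Qed.

Lemma clique_del_vertex G v K : clique G K -> v \notin K -> clique (del_vertex G v) K.
Proof.
move=> /cliqueP cK vK; apply/cliqueP => a b aK bK ab; rewrite adj_del_vertex cK //=.
by apply/andP; split; apply: contraNneq vK => <-.
Qed.

Lemma chordal_del_vertex G v : chordal G -> chordal (del_vertex G v).
Proof.
move=> chG W W0; case: (boolP (v \in W)) => vW.
  by exists v => // a b _ _; rewrite adj_del_vertex eqxx andbF.
have [w wW sw] := chG W W0; exists w => // a b aW bW.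
rewrite !adj_del_vertex => /andP[wa _] /andP[wb _] ab; rewrite (sw a b aW bW wa wb ab) /=.
by apply/andP; split; apply: contraNneq vW => <-.
Qed.

(* The maximal cliques through e are the same in both graphs. *)
Lemma exposed_del_vertex G v e : simple_graph G ->
  (forall D, maxclique G D -> e \subset D -> v \notin D) ->
  exposed (del_vertex G v) e = exposed G e.
Proof.
move=> sG avoidD.
have avoid K : clique G K -> e \subset K -> v \notin K.
  move=> cK sK; have [D mD sKD] := maxclique_exists cK.
  by apply: contra (avoidD D mD (subset_trans sK sKD)); apply: (subsetP sKD).
have mx D : e \subset D -> maxclique (del_vertex G v) D = maxclique G D.
  move=> sD; apply/maxcliqueP/maxcliqueP => [[cD hD] | [cD hD]].
    split=> [|K cK sDK]; first exact: sub_clique (del_vertex_sub G v) cD.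
    by apply: hD => //; apply: clique_del_vertex cK (avoid K cK (subset_trans sD sDK)).
  split=> [|K cK sDK]; first exact: clique_del_vertex cD (avoid D cD sD).
  exact: hD (sub_clique (del_vertex_sub G v) cK) sDK.
have eG : (e \in del_vertex G v) = (e \in G).
  rewrite inE; case eG: (e \in G) => //=; apply: avoid (subxx e).
  have [a [b [_ -> ab]]] := simple_edge_set2 sG eG.
  by apply/cliqueP => p q /set2P[]-> /set2P[]->; rewrite ?eqxx // adjC.
rewrite /exposed /facet_edge eG (mx e (subxx e)); congr [&& _, _ & _].
congr (_ == _); apply: eq_card => D; rewrite !inE.
by case sD: (e \subset D); rewrite ?andbF // !andbT mx ?sD.
Qed.

Lemma del_vertex_avoid_nbrs G v f D : f \in del_vertex G v -> ~~ (f \subset nbrs G v) ->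
  clique G D -> f \subset D -> v \notin D.
Proof.
rewrite inE => /andP[_ vf] fN /cliqueP cD sD; apply: contra fN => vD.
apply/subsetP => w wf; have wD := subsetP sD w wf.
by rewrite inE cD //; apply: contraNneq vf => ->.
Qed.

Lemma simplicial_supportT G v : simplicial G (support G) v -> simplicial G setT v.
Proof.
move=> sv a b _ _ va vb; apply: sv => //; rewrite inE; apply/existsP; exists v;
  by rewrite adjC.
Qed.

Lemma adj_setD1I G L e a b :
  adj ((G :&: L) :\ e) a b = [&& [set a; b] != e, [set a; b] \in G & [set a; b] \in L].
Proof. by rewrite /adj !inE. Qed.

Lemma exposed_triangle G x y : simple_graph G -> clique G (support G) ->
  exposed G [set x; y] ->
  exists z, [/\ z != x, z != y, exposed G [set x; z] & exposed G [set z; y]].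
Proof.
move=> sG cS ex; have /exposedP[C [xyG mC sC nCe _]] := ex.
have eqS D a b : maxclique G D -> a \in D -> b \in D -> a != b -> D = support G.
  move=> mD aD bD ab; apply/esym/(maxclique_eq mD cS).
  have cD := cliqueP _ _ (maxclique_clique mD).
  apply/subsetP => w wD; rewrite inE; apply/existsP.
  by have [->|wa] := eqVneq w a; [exists b | exists a]; apply: cD.
have xC : x \in C by apply: (subsetP sC); rewrite set21.
have yC : y \in C by apply: (subsetP sC); rewrite set22.
have xy : x != y := adj_neq sG (exposed_edge ex).
have /properP[_ [z zC zxy]] : [set x; y] \proper C by rewrite properEneq eq_sym nCe.
have zx : z != x by apply: contraNneq zxy => ->; rewrite set21.
have zy : z != y by apply: contraNneq zxy => ->; rewrite set22.
have expo a b c : a \in C -> b \in C -> c \in C -> a != b -> c != a -> c != b ->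
    exposed G [set a; b].
  move=> aC bC cC ab ca cb; apply/exposedP; exists C; split => //.
  - exact: (cliqueP _ _ (maxclique_clique mC)).
  - by apply/subsetP => w /set2P[]->.
  - apply/eqP => CE; move: cC; rewrite CE => /set2P[] E.
      by move: ca; rewrite E eqxx.
    by move: cb; rewrite E eqxx.
  - move=> D mD sD; rewrite (eqS C x y) // (eqS D a b) //;
      by apply: (subsetP sD); rewrite ?set21 ?set22.
by exists z; split => //; [apply: (expo x z y) | apply: (expo z y x)];
  rewrite // 1?eq_sym.
Qed.

Lemma exposed_bypass_del_vertex G L v x y : simple_graph G -> simplicial G setT v ->
  v != x -> v != y -> (forall f, exposed G f -> f != [set x; y] -> f \in L) ->
  connect (adj ((del_vertex G v :&: (L :|: nbr_edges G v)) :\ [set x; y])) x y ->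
  connect (adj ((G :&: L) :\ [set x; y])) x y.
Proof.
move=> sG sv vx vy hL; apply: connect_sub => a b.
rewrite !adj_setD1I inE => /and3P[nab /andP[abG _]]; rewrite !inE.
case/orP=> [abL | abN]; first by apply: connect1; rewrite adj_setD1I nab abG abL.
have va : adj G v a by have := subsetP abN a (set21 a b); rewrite inE.
have vb : adj G v b by have := subsetP abN b (set22 a b); rewrite inE.
have ab : a != b by apply: adj_neq sG abG.
have once : attached_once G setT by move=> w; rewrite in_setT.
have nbr_edge c d : adj G v c -> adj G v d -> c != d ->
    adj ((G :&: L) :\ [set x; y]) v c.
  move=> vc vd cd; have exc := exposed_simplicial_edge sG (in_setT v) (in_setT c)
    (in_setT d) vc vd cd sv once.
  by rewrite adj_setD1I set2_neq // (exposed_edge exc) hL // set2_neq.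
apply: (connect_trans (y := v)); apply: connect1.
  by rewrite adjC; apply: (nbr_edge a b).
by apply: (nbr_edge b a); rewrite // eq_sym.
Qed.

(* Induct on G by deleting a simplicial vertex outside the maximal clique of
   [x y]; if there is none, G is complete on its support and [x y] lies in an
   exposed triangle. *)
Lemma exposed_bypass G L x y : simple_graph G -> chordal G -> exposed G [set x; y] ->
  (forall f, exposed G f -> f != [set x; y] -> f \in L) ->
  connect (adj ((G :&: L) :\ [set x; y])) x y.
Proof.
move: L; have [n] := ubnP #|G|; elim: n G => // n IH G /ltnSE leGn L sG chG ex hL.
have /exposedP[C [_ mC sC _ hC]] := ex.
case: (boolP (clique G (support G))) => [cS | /(chordal_two_simplicial chG)].
  have [z [zx zy exz ezy]] := exposed_triangle sG cS ex.
  apply: (connect_trans (y := z)); apply: connect1; rewrite adj_setD1I hL //.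
  - by rewrite exposed_edge // setUC set2_neq.
  - by rewrite setUC set2_neq.
  - by rewrite exposed_edge // set2_neq.
  - by rewrite set2_neq.
move=> [v1 [v2 [v1S v2S v12 nv12 [s1 s2]]]].
have [v [vS vC sv]] :
    exists v, [/\ v \in support G, v \notin C & simplicial G (support G) v].
  case: (boolP (v1 \in C)) => v1C; last by exists v1.
  case: (boolP (v2 \in C)) => v2C; last by exists v2.
  by move: nv12; rewrite (cliqueP _ _ (maxclique_clique mC) v1 v2).
have [u vu] : exists u, adj G v u by move: vS; rewrite inE => /existsP.
have vx : v != x by apply: contraNneq vC => ->; apply: (subsetP sC); rewrite set21.
have vy : v != y by apply: contraNneq vC => ->; apply: (subsetP sC); rewrite set22.
apply: (exposed_bypass_del_vertex sG (simplicial_supportT sv) vx vy hL).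
apply: IH; first exact: leq_trans (card_del_vertex vu) leGn.
- exact: subset_trans (del_vertex_sub G v) sG.
- exact: chordal_del_vertex.
- by rewrite exposed_del_vertex // => D mD sD; rewrite (hC D mD sD).
move=> f exf nf; rewrite !inE.
case: (boolP (f \subset nbrs G v)) => fN; rewrite ?orbT ?orbF //.
apply: hL nf; rewrite -(exposed_del_vertex (v := v)) // => D mD sD.
exact: del_vertex_avoid_nbrs (exposed_edge exf) fN (maxclique_clique mD) sD.
Qed.

End Bypass.

Section Forests.
Variable X : finType.
Implicit Types (G H : graph X) (K : {set X}) (x y z a b : X).

Definition component G x := [set y | connect (adj G) x y].
Definition components G := component G @: [set: X].
Definition coarsen G K := \bigcup_(y in K) component G y.

Lemma connect_adjC G : connect_sym (adj G).
Proof. by apply: sym_connect_sym => x y; apply: adjC. Qed.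

Lemma sub_connect G H x y : G \subset H -> connect (adj G) x y -> connect (adj H) x y.
Proof. by move=> /subsetP sGH; apply: connect_sub => a b /sGH ab; apply: connect1. Qed.

Lemma component_eq G x y : connect (adj G) x y -> component G x = component G y.
Proof.
move=> cxy; apply/setP => z; rewrite !inE.
apply/idP/idP => h; last exact: connect_trans h.
by apply: connect_trans h; rewrite connect_adjC.
Qed.

Lemma mem_component G x : x \in component G x.
Proof. by rewrite inE connect0. Qed.

Lemma coarsen_component G H x : (forall a b, adj G a b -> connect (adj H) a b) ->
  coarsen H (component G x) = component H x.
Proof.
move=> h; apply/setP => z; apply/bigcupP/idP => [[y] | zx]; last first.
  by exists x; rewrite ?mem_component.
rewrite inE => cxy; rewrite (component_eq (y := x)) // connect_adjC.
exact: connect_sub cxy.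
Qed.

Lemma components_coarsen G H : (forall a b, adj G a b -> connect (adj H) a b) ->
  components H = coarsen H @: components G.
Proof.
move=> h; rewrite /components -imset_comp.
by apply: eq_imset => x /=; rewrite coarsen_component.
Qed.

Lemma leq_card_components G H : (forall a b, adj G a b -> connect (adj H) a b) ->
  #|components H| <= #|components G|.
Proof. by move=> h; rewrite (components_coarsen h); apply: leq_imset_card. Qed.

Lemma card_components0 : #|components (set0 : graph X)| = #|X|.
Proof.
have -> : components set0 = (@set1 X) @: [set: X].
  apply: eq_imset => x; apply/setP => y; rewrite !inE.
  apply/idP/eqP => [/connectP[[|z p]] //= | ->]; last exact: connect0.
  by rewrite /adj in_set0.
by rewrite card_imset ?cardsT //; apply: set1_inj.
Qed.

Lemma sub_acyclic G H : H \subset G -> acyclic G -> acyclic H.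
Proof.
move=> sHG ac [s [us ss cs]]; apply: ac; exists s; split => //.
by apply: sub_cycle cs => x y; apply: (subsetP sHG).
Qed.

Lemma acyclic_bridge G a b : acyclic G -> [set a; b] \in G -> a != b ->
  ~~ connect (adj (G :\ [set a; b])) a b.
Proof.
move=> ac abG ab; apply/negP => /connectP[p pp lp].
move: lp; case: (shortenP pp) => p' pp' up' _ lp'.
case: p' pp' up' lp' => [|c [|z q]] /=.
- by move=> _ _ E; move: ab; rewrite E eqxx.
- by rewrite andbT => cab _ E; move: cab; rewrite -E adj_setD1 eqxx.
- move=> pq uq lq; apply: ac; exists [:: a, c, z & q]; split => //.
  rewrite /cycle rcons_path; apply/andP; split; last by rewrite /= -lq adjC.
  apply: (sub_path _ (pq : path (adj (G :\ [set a; b])) a [:: c, z & q])).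
  by move=> x y; rewrite adj_setD1 => /andP[].
Qed.

Local Notation conn G a b := (connect (adj (G :\ [set a; b]))).
Local Notation reaches G a b x := (conn G a b x a || conn G a b x b).

Lemma connect_setD1 G a b x y : [set a; b] \in G -> connect (adj G) x y ->
  conn G a b x y || reaches G a b x && reaches G a b y.
Proof.
move=> abG /connectP[p pp ->].
elim: p x pp => [|z p IH] x /=; first by rewrite connect0.
move=> /andP[xz pz]; have := IH z pz; set w := last z p.
case: (boolP ([set x; z] == [set a; b])) => [/eqP/set2_eq_cases E | nE].
  have xab : reaches G a b x by case: E => [[-> _]|[-> _]]; rewrite connect0 ?orbT.
  have zab : reaches G a b z by case: E => [[_ ->]|[_ ->]]; rewrite connect0 ?orbT.
  rewrite xab /= => /orP[czw | /andP[_ ->]]; last by rewrite orbT.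
  rewrite connect_adjC in czw.
  by apply/orP; right; case/orP: zab => h; rewrite (connect_trans czw h) ?orbT.
have cxz : conn G a b x z by apply: connect1; rewrite adj_setD1 nE.
move=> /orP[czw | /andP[zab ->]]; first by rewrite (connect_trans cxz czw).
by rewrite andbT; apply/orP; right; case/orP: zab => h; rewrite (connect_trans cxz h) ?orbT.
Qed.

Lemma card_components_bridge G a b : acyclic G -> [set a; b] \in G -> a != b ->
  #|components (G :\ [set a; b])| = #|components G|.+1.
Proof.
move=> ac abG ab; set H := G :\ [set a; b].
have HG p q : adj H p q -> connect (adj G) p q.
  by rewrite adj_setD1 => /andP[_ h]; apply: connect1.
have Ka : component H a \in components H by apply: imset_f; rewrite in_setT.
have Kb : component H b \in components H by apply: imset_f; rewrite in_setT.
have Kab : component H a != component H b.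
  apply: contra (acyclic_bridge ac abG ab) => /eqP E.
  by have := mem_component H b; rewrite -E inE.
have gab : coarsen G (component H b) = coarsen G (component H a).
  by rewrite !coarsen_component //; apply: component_eq; rewrite connect_adjC connect1.
have -> : components G = coarsen G @: (components H :\ component H b).
  rewrite (components_coarsen HG); apply/setP => K.
  apply/imsetP/imsetP => [[K0 K0H ->] | [K0]].
    have [->|ne] := eqVneq K0 (component H b); last by exists K0; rewrite // in_setD1 ne.
    by exists (component H a); rewrite ?gab // in_setD1 Kab.
  by rewrite in_setD1 => /andP[_ K0H] ->; exists K0.
rewrite card_in_imset; first by rewrite (cardsD1 (component H b)) Kb.
move=> K1 K2 /setD1P[n1 /imsetP[x1 _ E1]] /setD1P[n2 /imsetP[x2 _ E2]]; subst K1 K2.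
rewrite !coarsen_component // => E.
have cx : connect (adj G) x1 x2 by have := mem_component G x2; rewrite -E inE.
have /orP[c12 | /andP[h1 h2]] := connect_setD1 abG cx; first exact: component_eq.
have to_a x : component H x != component H b -> reaches G a b x ->
    connect (adj H) x a.
  by move=> nb /orP[// | /component_eq xb]; rewrite xb eqxx in nb.
apply: component_eq; apply: connect_trans (to_a _ n1 h1) _.
by rewrite connect_adjC; apply: to_a.
Qed.

Lemma acyclic_card G : simple_graph G -> acyclic G -> #|G| + #|components G| = #|X|.
Proof.
have [n] := ubnP #|G|; elim: n G => // n IH G /ltnSE leGn sG ac.
have [->|[f fG]] := set_0Vmem G; first by rewrite cards0 card_components0.
have [a [b [ab fE _]]] := simple_edge_set2 sG fG; subst f.
have sH : G :\ [set a; b] \subset G by apply: subD1set.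
have eG : #|G| = #|G :\ [set a; b]|.+1 by rewrite (cardsD1 [set a; b] G) fG.
rewrite eG in leGn; rewrite -(IH _ leGn (subset_trans sH sG) (sub_acyclic sH ac)).
by rewrite (card_components_bridge ac fG ab) eG addSn addnS.
Qed.

Lemma acyclic_card_le G H : simple_graph G -> simple_graph H -> acyclic G -> acyclic H ->
  (forall a b, adj G a b -> connect (adj H) a b) -> #|G| <= #|H|.
Proof.
move=> sG sH aG aH h; have := leq_card_components h.
by rewrite -(leq_add2l #|G|) acyclic_card // -(acyclic_card sH aH) leq_add2r.
Qed.

End Forests.

Local Open Scope ring_scope.

Section Sublevels.
Variables (R : realDomainType) (I : finType) (w : I -> R).
Implicit Types (A B : {set I}) (P : pred I) (s : R).

Lemma exists_argmax P i0 : P i0 -> exists2 i, P i & forall j, P j -> w j <= w i.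
Proof. by move=> Pi0; case: (arg_maxP w Pi0) => i Pi h; exists i. Qed.

Definition sublevel A s := [set i in A | w i <= s].

Lemma sublevel_sub A s : sublevel A s \subset A.
Proof. by apply/subsetP => i; rewrite inE => /andP[]. Qed.

Lemma sublevel_le A s t : s <= t -> sublevel A s \subset sublevel A t.
Proof. by move=> st; apply/subsetP => i; rewrite !inE => /andP[-> /le_trans]; apply. Qed.

Lemma sublevel_setD1_max A a s : (forall j, j \in A -> w j <= w a) ->
  sublevel (A :\ a) s = if w a <= s then A :\ a else sublevel A s.
Proof.
move=> amax; apply/setP => i; case: ifP => as_; rewrite !inE.
  by case iA: (i \in A); rewrite ?andbF //= (le_trans (amax i iA) as_) !andbT.
by have [->|] := eqVneq i a; rewrite ?as_ ?andbF.
Qed.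

(* Pairing off the heaviest elements of A and B. *)
Lemma sum_le_sublevel A B : #|A| = #|B| ->
  (forall s, #|sublevel A s| <= #|sublevel B s|)%N ->
  \sum_(i in B) w i <= \sum_(i in A) w i.
Proof.
move: B; have [n] := ubnP #|A|; elim: n A => // n IH A /ltnSE leAn B eAB dom.
have [A0 | [a0 a0A]] := set_0Vmem A.
  have B0 : B = set0 by apply/eqP; rewrite -cards_eq0 -eAB A0 cards0.
  by rewrite A0 B0 !big_set0.
have [b0 b0B] : exists b, b \in B.
  by apply/set0Pn; rewrite -card_gt0 -eAB card_gt0; apply/set0Pn; exists a0.
have [a aA amax] := exists_argmax a0A; have {}aA : a \in A := aA.
have [b bB bmax] := exists_argmax b0B; have {}bB : b \in B := bB.
have ba : w b <= w a.
  have AaA : sublevel A (w a) = A.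
    apply/eqP; rewrite eqEsubset sublevel_sub.
    by apply/subsetP => i iA; rewrite inE iA amax.
  have : sublevel B (w a) = B.
    by apply/eqP; rewrite eqEcard sublevel_sub -eAB -{1}AaA dom.
  by move/setP/(_ b); rewrite inE bB => /andP[].
have eA : #|A| = #|A :\ a|.+1 by rewrite (cardsD1 a A) aA.
have eB : #|B| = #|B :\ b|.+1 by rewrite (cardsD1 b B) bB.
have eAB' : #|A :\ a| = #|B :\ b| by apply/eq_add_S; rewrite -eA -eB.
rewrite (big_setD1 a aA) (big_setD1 b bB) lerD // IH //; first by rewrite -ltnS -eA.
move=> s; rewrite !sublevel_setD1_max //.
case: (leP (w b) s) => [bs | sb]; last by rewrite !ifN -?ltNge // (lt_le_trans sb ba).
rewrite -eAB'; case: ifP => as_ //.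
apply/subset_leq_card/subsetP => i; rewrite !inE => /andP[iA ws]; rewrite iA andbT.
by apply: contraFneq as_ => <-.
Qed.

End Sublevels.

Section ErasureInvariant.
Variables (R : realType) (X : finType) (d : X -> X -> R).
Implicit Types (G H T : graph X) (e f : {set X}) (s : R) (x y a b u v : X).

Definition minimax_paths G :=
  forall u v, connect (adj (sublevel (ew d) G (ew d [set u; v]))) u v.

Definition erasure_invariant G := [/\ simple_graph G, chordal G & minimax_paths G].

Lemma derasureP G H : reflect
  (exists e, [/\ exposed G e, H = G :\ e & forall e', exposed G e' -> ew d e' <= ew d e])
  (derasure d G H).
Proof.
apply: (iffP existsP) => [[e /and3P[ex /eqP-> /forall_inP h]] | [e [ex -> h]]].
  by exists e; split.
by exists e; rewrite ex eqxx; apply/forall_inP.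
Qed.

Lemma exposed_derasure G e : exposed G e -> exists H, derasure d G H.
Proof.
move=> ex; have [e0 ex0 e0max] := exists_argmax (ew d) ex.
by exists (G :\ e0); apply/derasureP; exists e0.
Qed.

Lemma erasure_invariant_complete : erasure_invariant (complete_graph X).
Proof.
split; first exact: subxx.
  move=> W /set0Pn[v vW]; exists v => // a b _ _ _ _ ab.
  by rewrite /adj inE cards2 ab.
move=> u v; have [-> | uv] := eqVneq u v; first exact: connect0.
by apply: connect1; rewrite /adj !inE cards2 uv /=.
Qed.

Lemma erasure_invariant_derasure G H :
  erasure_invariant G -> derasure d G H -> erasure_invariant H.
Proof.
move=> [sG chG mG] /derasureP[e [ex -> emax]].
split; first exact: subset_trans (subD1set G e) sG.
  exact: chordal_erase.
move=> u v.
apply: connect_sub (mG u v) => a b; rewrite /adj inE => /andP[abG abl].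
have [abe | nabe] := eqVneq [set a; b] e; last first.
  by apply: connect1; rewrite /adj !inE nabe abG abl.
subst e; pose L := sublevel (ew d) G (ew d [set a; b]).
apply: sub_connect (exposed_bypass (L := L) sG chG ex _).
  by apply/subsetP => f; rewrite !inE => /andP[-> /andP[-> /le_trans]]; apply.
by move=> f exf _; rewrite inE (exposed_edge exf) emax.
Qed.

Lemma erasure_invariant_path G gs :
  erasure_invariant G -> path (derasure d) G gs -> erasure_invariant (last G gs).
Proof.
elim: gs G => [|H gs IH] G //= iG /andP[dGH pH].
exact: IH (erasure_invariant_derasure iG dGH) pH.
Qed.

Lemma spanning_tree_card T T' : spanning_tree T -> spanning_tree T' -> #|T| = #|T'|.
Proof.
move=> [s1 c1 a1] [s2 c2 a2]; apply/eqP; rewrite eqn_leq.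
by rewrite (acyclic_card_le s1 s2 a1 a2 (fun a b _ => c2 a b))
  (acyclic_card_le s2 s1 a2 a1 (fun a b _ => c1 a b)).
Qed.

Lemma erasure_invariant_MST G : erasure_invariant G ->
  (forall e, ~~ exposed G e) -> is_MST d G.
Proof.
move=> [sG chG mG] nex.
have aG : acyclic G := chordal_acyclic sG chG nex.
have tG : spanning_tree G.
  by split => // x y; apply: sub_connect (mG x y); apply: sublevel_sub.
split => // T [sT cT aT]; apply: sum_le_sublevel; first exact: spanning_tree_card.
move=> s; have subl H : sublevel (ew d) H s \subset H by apply: sublevel_sub.
apply: acyclic_card_le; [exact: subset_trans (subl T) sT | exact: subset_trans (subl G) sG
  | exact: sub_acyclic (subl T) aT | exact: sub_acyclic (subl G) aG |].
move=> a b; rewrite /adj inE => /andP[_ abs].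
exact: sub_connect (sublevel_le _ _ abs) (mG a b).
Qed.

Lemma derasure_terminal_MST gs : path (derasure d) (complete_graph X) gs ->
  ~ (exists H, derasure d (last (complete_graph X) gs) H) ->
  is_MST d (last (complete_graph X) gs).
Proof.
move=> pgs nd; apply: erasure_invariant_MST.
  exact: erasure_invariant_path erasure_invariant_complete pgs.
by move=> e; apply/negP => /exposed_derasure.
Qed.

End ErasureInvariant.

Section Terminal.
Variables (R : realType) (X : finType) (d : X -> X -> R).
Implicit Types (G H T : graph X).

Lemma exists_terminal_path G : exists2 gs,
  path (derasure d) G gs & ~ (exists H, derasure d (last G gs) H).
Proof.
have [n] := ubnP #|G|; elim: n G => // n IH G /ltnSE leGn.
case: (boolP [exists H, derasure d G H]) => [/existsP[H dGH] | /existsPn nd]; last first.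
  by exists [::] => // -[H]; apply/negP.
have /derasureP[e [ex eH _]] := dGH.
have ltH : (#|H| < #|G|)%N by rewrite eH (cardsD1 e G) (exposed_edge ex).
have [gs pgs nd] := IH H (leq_trans ltH leGn).
by exists (H :: gs); rewrite /= ?dGH.
Qed.

Lemma simple_derasure G H : simple_graph G -> derasure d G H -> simple_graph H.
Proof. by move=> sG /derasureP[e [_ -> _]]; apply: subset_trans (subD1set G e) sG. Qed.

Lemma spanning_tree_terminal T : spanning_tree T -> ~ (exists H, derasure d T H).
Proof.
move=> [sT _ aT] [H /derasureP[e [ex _ _]]].
by move: (acyclic_no_exposed e sT aT); rewrite ex.
Qed.

End Terminal.

Lemma exists_gap (R : realFieldType) (I : finType) (w : I -> R) :
  exists2 eps, 0 < eps & forall i j, w j < w i -> eps + w j < w i.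
Proof.
suff [eps eps_gt0 gap] : exists2 eps, 0 < eps &
    forall p, p \in enum [set: I * I] -> w p.2 < w p.1 -> eps + w p.2 < w p.1.
  by exists eps => // i j; apply: (gap (i, j)); rewrite mem_enum in_setT.
elim: (enum _) => [|p s [eps eps_gt0 gap]]; first by exists 1.
case: (ltP (w p.2) (w p.1)) => lp; last first.
  by exists eps => // q; rewrite inE => /orP[/eqP-> | /gap//]; rewrite ltNge lp.
exists (Num.min eps ((w p.1 - w p.2) / 2)).
  by rewrite lt_min eps_gt0 divr_gt0 ?subr_gt0.
move=> q; rewrite inE => /orP[/eqP-> | qs] lq.
  apply: le_lt_trans (_ : (w p.1 - w p.2) / 2 + w p.2 < w p.1); last lra.
  by rewrite lerD2r ge_min lexx orbT.
by apply: le_lt_trans (gap q qs lq); rewrite lerD2r ge_min lexx.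
Qed.

(* eps lies below every positive gap between edge weights, so the penalty
   changes no strict comparison of d-weights. *)
Section Perturbation.
Variables (R : realType) (X : finType) (d : X -> X -> R) (T : graph X) (eps : R).
Hypothesis eps_gt0 : 0 < eps.
Hypothesis eps_gap : forall f g, ew d g < ew d f -> eps + ew d g < ew d f.
Implicit Types (G H F : graph X) (e f : {set X}).

Let penalty f := if f \in T then 0 else eps.
Let d' x y := d x y + penalty [set x; y].

Lemma penalty_ge0 f : 0 <= penalty f.
Proof. by rewrite /penalty; case: ifP => // _; apply: ltW. Qed.

Lemma penalty_le_eps f : penalty f <= eps.
Proof. by rewrite /penalty; case: ifP => // _; apply: ltW. Qed.

Lemma ew_perturbed f : f \in complete_graph X -> ew d' f = ew d f + penalty f.
Proof.
rewrite inE => /eqP cf; have : size (enum f) = 2%N by rewrite -cardE.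
case E: (enum f) => [|x [|y [|z s]]] // _.
have fE : f = [set x; y] by apply/setP => w; rewrite -mem_enum E !inE.
by rewrite /ew E /d' -fE.
Qed.

Lemma perturbed_derasure G H : simple_graph G -> derasure d' G H -> derasure d G H.
Proof.
move=> sG /derasureP[e [ex eH emax]]; apply/derasureP; exists e; split => // e' ex'.
have := emax e' ex'; rewrite !ew_perturbed ?(subsetP sG) ?exposed_edge //.
move=> le'; rewrite leNgt; apply/negP => /eps_gap.
by have := penalty_ge0 e'; have := penalty_le_eps e; lra.
Qed.

Lemma perturbed_path G gs : simple_graph G ->
  path (derasure d') G gs -> path (derasure d) G gs.
Proof.
elim: gs G => [|H gs IH] G //= sG /andP[dGH pH].
by rewrite (perturbed_derasure sG dGH) IH // (simple_derasure sG dGH).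
Qed.

Lemma perturbed_MST_sub F : is_MST d T -> is_MST d' F -> F \subset T.
Proof.
move=> [tT mT] [tF mF]; have [sT _ _] := tT; have [sF _ _] := tF.
have wT : total_weight d' T = total_weight d T.
  by apply: eq_bigr => f fT; rewrite ew_perturbed ?(subsetP sT) // /penalty fT addr0.
have wF : total_weight d' F = total_weight d F + \sum_(f in F) penalty f.
  rewrite /total_weight -big_split; apply: eq_bigr => f fF.
  by rewrite ew_perturbed ?(subsetP sF).
have sum_penalty_le0 : \sum_(f in F) penalty f <= 0.
  by have := mF T tT; have := mT F tF; rewrite wT wF; lra.
apply/subsetP => f fF; apply: contraTT sum_penalty_le0 => fT; rewrite -ltNge.
apply: lt_le_trans (_ : penalty f <= _); first by rewrite /penalty (negbTE fT).
by rewrite (bigD1 f fF) lerDl; apply: sumr_ge0 => g _; apply: penalty_ge0.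
Qed.

End Perturbation.

Lemma MST_derasure_sequence (R : realType) (X : finType) (d : X -> X -> R) T :
  is_MST d T -> exists gs : seq (graph X),
    [/\ path (derasure d) (complete_graph X) gs, last (complete_graph X) gs = T &
        ~ (exists H : graph X, derasure d T H)].
Proof.
move=> mT; have [eps eps_gt0 gap] := exists_gap (ew d).
pose d' x y := d x y + (if [set x; y] \in T then 0 else eps).
have [gs pgs nd] := exists_terminal_path d' (complete_graph X).
have mF := derasure_terminal_MST pgs nd.
have FT := perturbed_MST_sub eps_gt0 mT mF.
have eqFT : last (complete_graph X) gs = T.
  by apply/eqP; rewrite eqEcard FT (spanning_tree_card mT.1 mF.1) leqnn.
exists gs; split => //; last exact: spanning_tree_terminal mT.1.
exact: (@perturbed_path _ _ d T eps eps_gt0 gap _ _ (subxx _) pgs).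
Qed.

Theorem corollary3p3 (R : realType) (X : finType) (d : X -> X -> R) :
  is_metric d ->
  (forall gs : seq (graph X),
      path (derasure d) (complete_graph X) gs ->
      ~ (exists H : graph X, derasure d (last (complete_graph X) gs) H) ->
      is_MST d (last (complete_graph X) gs)) /\
  (forall T : graph X, is_MST d T ->
      exists gs : seq (graph X),
        [/\ path (derasure d) (complete_graph X) gs,
            last (complete_graph X) gs = T &
            ~ (exists H : graph X, derasure d T H)]).
Proof.
by move=> _; split; [exact: derasure_terminal_MST | exact: MST_derasure_sequence].
Qed.
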